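(* Let $A\in\mathbb{R}^{n\times n}$ with $A\ge 0$, $B\in\mathbb{R}^{n\times m}$, $C\in\mathbb{R}^{p\times n}$. For gains $\overline{K},\underline{K}\in\mathbb{R}^{m\times n}$ and $\overline{L},\underline{L}\in\mathbb{R}^{n\times p}$ let \[ M=\begin{bmatrix} A & B\overline{K} & B\underline{K} \\ \overline{L}C & A-\overline{L}C+B\overline{K} & B\underline{K} \\ \underline{L}C & B\overline{K} & A-\underline{L}C+B\underline{K} \end{bmatrix} \] and $\mathcal{X}=\{(x,\overline{x},\underline{x}) : x,\overline{x},\underline{x}\in\mathbb{R}^n_+,\ \underline{x}\le x\le \overline{x}\}$. The following statements are equivalent: (i) There exist $K\in\mathbb{R}^{m\times n}$ and $L\in\mathbb{R}^{n\times p}$ such that $A-LC$ and $A+BK$ are Schur, $A-LC\ge 0$, $A+BK\ge0$ and $LC\ge 0$. (ii) There exist gains $\overline{K},\underline{K},\overline{L},\underline{L}$ with $\underline{L}C\ge 0$ such that $M$ is Schur (i.e., the closed-loop system $(x,\overline{x},\underline{x})(t+1)=M(x,\overline{x},\underline{x})(t)$ is asymptotically stable) and $\mathcal{X}$ is invariant under $(x,\overline{x},\underline{x})(t+1)=M(x,\overline{x},\underline{x})(t)$.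
   Context: All inequalities between matrices or vectors are element-wise; $\mathbb{R}^n_+$ is the closed nonnegative orthant. A square matrix is Schur if its spectral radius is less than $1$. The matrix $M$ is the closed-loop matrix of the system $x(t+1)=Ax(t)+Bu(t)$, $y(t)=Cx(t)$ with upper and lower Luenberger observers $\overline{x}(t+1)=(A-\overline{L}C)\overline{x}(t)+\overline{L}y(t)+Bu(t)$, $\underline{x}(t+1)=(A-\underline{L}C)\underline{x}(t)+\underline{L}y(t)+Bu(t)$ and feedback $u(t)=\underline{K}\,\underline{x}(t)+\overline{K}\,\overline{x}(t)$. Invariance of $\mathcal{X}$ means every trajectory starting in $\mathcal{X}$ stays in $\mathcal{X}$ for all $t\ge0$. *)

(* real matrices over an arbitrary real closed field R
   (the reals are one instance); complex eigenvalues live in R[i]. *)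
From HB Require Import structures.
From mathcomp Require Import all_boot all_order all_algebra.
From mathcomp Require Import complex.
Set Implicit Arguments. Unset Strict Implicit. Unset Printing Implicit Defensive.
Import Order.TTheory GRing.Theory Num.Theory.
Local Open Scope ring_scope.

Definition mxle (R : numDomainType) (m n : nat) (A B : 'M[R]_(m, n)) : Prop :=
  forall i j, A i j <= B i j.

Definition mx_nneg (R : numDomainType) (m n : nat) (A : 'M[R]_(m, n)) : Prop :=
  mxle 0 A.

Definition schur (R : rcfType) (n : nat) (A : 'M[R]_n) : Prop :=
  forall z : R[i], eigenvalue (map_mx (real_complex R) A) z -> `|z| < 1.

(* Closed-loop matrix M, state ordered as (x, xbar, xund). *)
Definition closed_loop (R : rcfType) (n m p : nat)
  (A : 'M[R]_n) (B : 'M[R]_(n, m)) (C : 'M[R]_(p, n))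
  (Kb Ku : 'M[R]_(m, n)) (Lb Lu : 'M[R]_(n, p)) : 'M[R]_(n + (n + n)) :=
  block_mx A (row_mx (B *m Kb) (B *m Ku))
           (col_mx (Lb *m C) (Lu *m C))
           (block_mx (A - Lb *m C + B *m Kb) (B *m Ku)
                     (B *m Kb) (A - Lu *m C + B *m Ku)).

Definition in_X (R : rcfType) (n : nat) (z : 'cV[R]_(n + (n + n))) : Prop :=
  let x := usubmx z in
  let xb := usubmx (dsubmx z) in
  let xu := dsubmx (dsubmx z) in
  [/\ mx_nneg x, mx_nneg xb, mx_nneg xu, mxle xu x & mxle x xb].

Definition traj (R : rcfType) (N : nat) (M : 'M[R]_N) (z0 : 'cV[R]_N) (t : nat)
  : 'cV[R]_N := iter t (fun z => M *m z) z0.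

Definition X_invariant (R : rcfType) (n : nat) (M : 'M[R]_(n + (n + n))) : Prop :=
  forall z0, in_X z0 -> forall t, in_X (traj M z0 t).

From HB Require Import structures.
From mathcomp Require Import all_boot all_order all_algebra.
From mathcomp Require Import complex ring.
Import Order.TTheory GRing.Theory Num.Theory.
Local Open Scope ring_scope.

(* The observer errors [xb - x] and [x - xu] evolve autonomously, under
   [A - Lb C] and [A - Lu C] respectively.  In the coordinates
   [(x, xb - x, x - xu)] the closed loop is therefore block upper triangular
   with diagonal blocks [A + B (Kb + Ku)], [A - Lb C], [A - Lu C], so [M] is
   Schur iff these three are.  Moreover [X] is exactly the set where [xu >= 0]
   and both errors are [>= 0]: with [Kb = 0], [Ku = K], [Lb = Lu = L] the sign
   conditions of (i) make [X] invariant, and conversely the trajectories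
   starting at [(v, v, 0)] and [(v, v, v)] with [v >= 0] force
   [A - Lu C >= 0] and [A + B (Kb + Ku) >= 0]. *)

(* Closes identities that are linear in the matrix products occurring in
   them: the products are abstracted and the identity is checked entrywise. *)
Ltac mx_linear_identity :=
  rewrite ?(mulmxDl, mulmxDr, mulmxBl, mulmxBr, mulNmx, mulmxN);
  repeat match goal with |- context [?X *m ?Y] => move: (X *m Y) => ? end;
  apply/matrixP => i j; rewrite !mxE; ring.

Lemma char_poly_ublock {R : comNzRingType} {n1 n2}
    (P : 'M[R]_n1) (Q : 'M[R]_(n1, n2)) (S : 'M[R]_n2) :
  char_poly (block_mx P Q 0 S) = char_poly P * char_poly S.
Proof.
rewrite /char_poly /char_poly_mx map_block_mx scalar_mx_block.
by rewrite opp_block_mx add_block_mx map_mx0 oppr0 addr0 det_ublock.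
Qed.

Lemma char_poly_similar {R : comUnitRingType} {n} (M N T : 'M[R]_n) :
  T \in unitmx -> T *m M = N *m T -> char_poly M = char_poly N.
Proof.
rewrite unitmxE => unitT TM_NT.
have : char_poly_mx N *m map_mx polyC T = map_mx polyC T *m char_poly_mx M.
  by rewrite /char_poly_mx mulmxBl mulmxBr -!map_mxM TM_NT scalar_mxC.
move/(congr1 determinant); rewrite !det_mulmx det_map_mx /= mulrC.
move/(congr1 (fun q => (\det T)^-1%:P * q)).
by rewrite !mulrA -polyCM mulVr // polyC1 !mul1r.
Qed.

Section Schur.
Context {R : rcfType}.

Lemma schur_char_polyE n (M : 'M[R]_n) :
  schur M <->
  forall z : R[i], root (map_poly (real_complex R) (char_poly M)) z -> `|z| < 1.
Proof.
by split=> schurM z; have := schurM z; rewrite eigenvalue_root_char map_char_poly.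
Qed.

Lemma schur_char_polyM {n n1 n2} {M : 'M[R]_n} {P : 'M[R]_n1} {S : 'M[R]_n2} :
  char_poly M = char_poly P * char_poly S -> schur M <-> schur P /\ schur S.
Proof.
move=> charM; rewrite !schur_char_polyE charM rmorphM /=; split.
  by move=> schurM; split=> z rootz; apply: schurM; rewrite rootM rootz ?orbT.
by move=> [schurP schurS] z; rewrite rootM => /orP[/schurP|/schurS].
Qed.

End Schur.

Section NonnegativeMatrices.
Context {R : numDomainType}.

Lemma mx_nnegP m n (a : 'M[R]_(m, n)) : mx_nneg a <-> forall i j, 0 <= a i j.
Proof. by split=> a_ge0 i j; have := a_ge0 i j; rewrite mxE. Qed.

Lemma mx_nneg0 m n : mx_nneg (0 : 'M[R]_(m, n)).
Proof. by apply/mx_nnegP=> i j; rewrite mxE. Qed.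

Lemma mx_nnegD m n (a b : 'M[R]_(m, n)) :
  mx_nneg a -> mx_nneg b -> mx_nneg (a + b).
Proof.
by move=> /mx_nnegP a_ge0 /mx_nnegP b_ge0; apply/mx_nnegP=> i j; rewrite mxE addr_ge0.
Qed.

Lemma mx_nnegM m n k (a : 'M[R]_(m, n)) (b : 'M[R]_(n, k)) :
  mx_nneg a -> mx_nneg b -> mx_nneg (a *m b).
Proof.
move=> /mx_nnegP a_ge0 /mx_nnegP b_ge0; apply/mx_nnegP=> i j; rewrite mxE.
by apply: sumr_ge0 => l _; rewrite mulr_ge0.
Qed.

Lemma mxleE m n (a b : 'M[R]_(m, n)) : mxle a b <-> mx_nneg (b - a).
Proof. by split=> le_ab i j; have := le_ab i j; rewrite !mxE subr_ge0. Qed.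

Lemma mx_nneg_col_mx m1 m2 n (a : 'M[R]_(m1, n)) (b : 'M[R]_(m2, n)) :
  mx_nneg (col_mx a b) <-> mx_nneg a /\ mx_nneg b.
Proof.
rewrite !mx_nnegP; split=> [ab_ge0|[a_ge0 b_ge0] i j].
  by split=> i j; [have := ab_ge0 (lshift m2 i) j|have := ab_ge0 (rshift m1 i) j];
    rewrite (col_mxEu, col_mxEd).
by rewrite mxE; case: splitP => k _.
Qed.

Lemma mx_nneg_row_mx m n1 n2 (a : 'M[R]_(m, n1)) (b : 'M[R]_(m, n2)) :
  mx_nneg (row_mx a b) <-> mx_nneg a /\ mx_nneg b.
Proof.
rewrite !mx_nnegP; split=> [ab_ge0|[a_ge0 b_ge0] i j].
  by split=> i j; [have := ab_ge0 i (lshift n2 j)|have := ab_ge0 i (rshift n1 j)];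
    rewrite (row_mxEl, row_mxEr).
by rewrite mxE; case: splitP => k _.
Qed.

Lemma mx_nneg_of_orthant_invariant m n (a : 'M[R]_(m, n)) :
  (forall v : 'cV[R]_n, mx_nneg v -> mx_nneg (a *m v)) -> mx_nneg a.
Proof.
move=> a_orthant; apply/mx_nnegP=> i j.
have /a_orthant/mx_nnegP : mx_nneg (delta_mx j 0 : 'cV[R]_n).
  by apply/mx_nnegP=> k l; rewrite mxE; case: (_ && _).
by move=> /(_ i 0); rewrite -colE mxE.
Qed.

End NonnegativeMatrices.

Section ObserverError.
Variables (R : rcfType) (n : nat).

Definition observer_error : 'M[R]_(n + n, n + (n + n)) :=
  row_mx (col_mx (- 1%:M) 1%:M) (block_mx 1%:M 0 0 (- 1%:M)).

Lemma observer_error_col (x xb xu : 'cV[R]_n) :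
  observer_error *m col_mx x (col_mx xb xu) = col_mx (xb - x) (x - xu).
Proof.
rewrite mul_row_col mul_col_mx mul_block_col add_col_mx !mulNmx !mul1mx.
by rewrite !mul0mx addr0 add0r addrC.
Qed.

Lemma vsubmx3K (z : 'cV[R]_(n + (n + n))) :
  col_mx (usubmx z) (col_mx (usubmx (dsubmx z)) (dsubmx (dsubmx z))) = z.
Proof. by rewrite !vsubmxK. Qed.

Lemma in_XE (z : 'cV[R]_(n + (n + n))) :
  in_X z <-> mx_nneg (dsubmx (dsubmx z)) /\ mx_nneg (observer_error *m z).
Proof.
rewrite /in_X -[observer_error *m z](congr1 (mulmx _) (vsubmx3K z)).
rewrite observer_error_col mx_nneg_col_mx.
move: (usubmx z) (usubmx (dsubmx z)) (dsubmx (dsubmx z)) => x xb xu.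
split=> [[_ _ xu_ge0 /mxleE eu_ge0 /mxleE eb_ge0] //|[xu_ge0 [eb_ge0 eu_ge0]]].
have x_ge0 : mx_nneg x by rewrite -(subrK xu x); apply: mx_nnegD.
split=> //; try exact/mxleE.
by rewrite -(subrK x xb); apply: mx_nnegD.
Qed.

Lemma X_invariantP (M : 'M[R]_(n + (n + n))) :
  X_invariant M <-> forall z, in_X z -> in_X (M *m z).
Proof.
split=> [M_inv z z_in|M_step z z_in]; first exact: (M_inv z z_in 1%N).
by elim=> [//|t IHt]; rewrite /traj iterS; apply: M_step.
Qed.

End ObserverError.

Arguments observer_error {R} n.

Section ClosedLoop.
Variables (R : rcfType) (n m p : nat).
Variables (A : 'M[R]_n) (B : 'M[R]_(n, m)) (C : 'M[R]_(p, n)).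
Variables (Kb Ku : 'M[R]_(m, n)) (Lb Lu : 'M[R]_(n, p)).

Local Notation M := (closed_loop A B C Kb Ku Lb Lu).
Local Notation error_dynamics := (block_mx (A - Lb *m C) 0 0 (A - Lu *m C)).

Lemma observer_error_closed_loop :
  observer_error n *m M = error_dynamics *m observer_error n.
Proof.
rewrite /closed_loop /observer_error !block_mxEh.
rewrite ?(mul_mx_row, mul_row_col, mul_col_mx) !add_row_mx !add_col_mx.
rewrite ?(mul0mx, mul1mx, mulmx1, mulNmx, mulmxN, mulmx0).
by congr row_mx; [|congr row_mx]; congr col_mx; mx_linear_identity.
Qed.

Lemma char_poly_closed_loop :
  char_poly M = char_poly (A + B *m (Kb + Ku)) * char_poly error_dynamics.
Proof.
rewrite -(char_poly_ublock _ (row_mx (B *m Kb) (- (B *m Ku)))).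
apply: (char_poly_similar _ _ (col_mx (row_mx 1%:M 0) (observer_error n))).
  rewrite unitmxE /observer_error -/(block_mx _ _ _ _) det_lblock det_ublock.
  by rewrite -scaleN1r detZ !det1 !mulr1 !mul1r unitrX ?unitrN1.
rewrite mul_col_mx observer_error_closed_loop mul_block_col mul0mx add0r.
congr col_mx; rewrite /closed_loop /observer_error !block_mxEh.
rewrite ?(mul_mx_row, mul_row_col, mul_col_mx) !add_row_mx.
rewrite ?(mul0mx, mul1mx, mulmx1, mulNmx, mulmxN, mulmx0).
by rewrite add0r; congr row_mx; [|congr row_mx]; mx_linear_identity.
Qed.

Lemma schur_closed_loop :
  schur M <->
  [/\ schur (A + B *m (Kb + Ku)), schur (A - Lb *m C) & schur (A - Lu *m C)].
Proof.
rewrite (schur_char_polyM char_poly_closed_loop).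
rewrite (schur_char_polyM (char_poly_ublock (A - Lb *m C) 0 (A - Lu *m C))).
by split=> [[? [? ?]]|[? ? ?]].
Qed.

Lemma observer_error_step (z : 'cV[R]_(n + (n + n))) :
  observer_error n *m (M *m z) = error_dynamics *m (observer_error n *m z).
Proof. by rewrite !mulmxA observer_error_closed_loop. Qed.

Lemma closed_loop_lower_estimate (x xb xu : 'cV[R]_n) :
  dsubmx (dsubmx (M *m col_mx x (col_mx xb xu))) =
  Lu *m C *m x + B *m Kb *m xb + (A - Lu *m C + B *m Ku) *m xu.
Proof.
rewrite /closed_loop mul_block_col mul_col_mx mul_block_col mul_row_col.
by rewrite add_col_mx !col_mxKd addrA.
Qed.

Lemma X_invariant_observer_nneg : X_invariant M -> mx_nneg (A - Lu *m C).
Proof.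
move=> /X_invariantP X_step; apply: mx_nneg_of_orthant_invariant => v v_ge0.
have /X_step/in_XE[_] : in_X (col_mx v (col_mx v 0)).
  apply/in_XE; rewrite !col_mxKd observer_error_col subrr subr0.
  by split; [|apply/mx_nneg_col_mx; split=> //]; apply: mx_nneg0.
rewrite observer_error_step observer_error_col subrr subr0.
by rewrite mul_block_col !mulmx0 mul0mx !add0r => /mx_nneg_col_mx[].
Qed.

Lemma X_invariant_feedback_nneg : X_invariant M -> mx_nneg (A + B *m (Kb + Ku)).
Proof.
move=> /X_invariantP X_step; apply: mx_nneg_of_orthant_invariant => v v_ge0.
have /X_step/in_XE[] : in_X (col_mx v (col_mx v v)).
  apply/in_XE; rewrite !col_mxKd observer_error_col subrr col_mx0.
  by split; last exact: mx_nneg0.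
rewrite closed_loop_lower_estimate.
suff -> : (A + B *m (Kb + Ku)) *m v =
          Lu *m C *m v + B *m Kb *m v + (A - Lu *m C + B *m Ku) *m v by [].
by mx_linear_identity.
Qed.

End ClosedLoop.

Lemma X_invariant_closed_loop {R : rcfType} {n m p : nat}
    (A : 'M[R]_n) (B : 'M[R]_(n, m)) (C : 'M[R]_(p, n))
    (K : 'M[R]_(m, n)) (L : 'M[R]_(n, p)) :
  mx_nneg A -> mx_nneg (A - L *m C) -> mx_nneg (A + B *m K) -> mx_nneg (L *m C) ->
  X_invariant (closed_loop A B C 0 K L L).
Proof.
move=> A_ge0 AL_ge0 AK_ge0 LC_ge0; apply/X_invariantP => z; rewrite -[z]vsubmx3K.
move: (usubmx z) (usubmx (dsubmx z)) (dsubmx (dsubmx z)) => x xb xu.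
rewrite in_XE !col_mxKd observer_error_col => -[xu_ge0 e_ge0].
have /mx_nneg_col_mx[_ eu_ge0] := e_ge0.
apply/in_XE; split.
  rewrite closed_loop_lower_estimate mulmx0 mul0mx addr0.
  have -> : L *m C *m x + (A - L *m C + B *m K) *m xu =
            (A + B *m K) *m xu + L *m C *m (x - xu) by mx_linear_identity.
  by apply: mx_nnegD; apply: mx_nnegM.
rewrite observer_error_step; apply: mx_nnegM; last by rewrite observer_error_col.
by apply/mx_nneg_col_mx; split; apply/mx_nneg_row_mx; split=> //; apply: mx_nneg0.
Qed.

Theorem theorem1 (R : rcfType) (n m p : nat)
  (A : 'M[R]_n) (B : 'M[R]_(n, m)) (C : 'M[R]_(p, n)) :
  mx_nneg A ->
  ((exists (K : 'M[R]_(m, n)) (L : 'M[R]_(n, p)),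
      [/\ schur (A - L *m C), schur (A + B *m K),
          mx_nneg (A - L *m C), mx_nneg (A + B *m K) & mx_nneg (L *m C)])
   <->
   (exists (Kb Ku : 'M[R]_(m, n)) (Lb Lu : 'M[R]_(n, p)),
      [/\ mx_nneg (Lu *m C),
          schur (closed_loop A B C Kb Ku Lb Lu)
        & X_invariant (closed_loop A B C Kb Ku Lb Lu)])).
Proof.
move=> A_ge0; split.
  case=> K [L] [schurL schurK AL_ge0 AK_ge0 LC_ge0].
  exists 0, K, L, L; split=> //; last exact: X_invariant_closed_loop.
  by apply/schur_closed_loop; rewrite add0r.
case=> Kb [Ku] [Lb] [Lu] [LuC_ge0 /schur_closed_loop[schurK _ schurLu] X_inv].
exists (Kb + Ku), Lu; split=> //.
  exact: X_invariant_observer_nneg X_inv.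
exact: X_invariant_feedback_nneg X_inv.
Qed.
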